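(* Every multiplicative generalized seminorm $\mathbb{Z}\to R$ with $R$ of tempered growth is multiplicatively equivalent to one of the following: the $p$-adic seminorm $|\cdot|_p$ for a prime $p$; the $p$-residual seminorm $|\cdot|_{p,0}$ for a prime $p$; the trivial norm $|\cdot|_0$; the archimedean norm $|\cdot|_\infty$. Thus $$\mathrm{Speh}^m(\mathbb{Z})=\{|\cdot|_p,|\cdot|_{p,0}: p\text{ prime}\}\cup\{|\cdot|_0\}\cup\{|\cdot|_\infty\}.$$ Moreover, the natural map $\mathcal{M}(\mathbb{Z})\to\mathrm{Speh}^m(\mathbb{Z})$, sending a multiplicative $\mathbb{R}_+$-valued seminorm to its multiplicative equivalence class, is surjective.
   Context: Halo: commutative unital semiring with a partial order compatible with $+$ and $\cdot$; halo morphism: increasing $f$ with $f(0)=0,f(1)=1$, $f(a+b)\le f(a)+f(b)$, $f(ab)\le f(a)f(b)$; rings carry the trivial order. An aura is a halo whose semiring is a semifield; positive means $0<1$. A generalized seminorm on a ring $A$ is a halo morphism to a positive totally ordered aura $R$; multiplicative if $|ab|=|a||b|$; tempered if $R$ has tempered growth: for every non-zero $P\in\mathbb{N}[X]$ and $x\in R$, ($x^n\le P(n)$ for all $n$) implies $x\le1$. Two seminorms $|\cdot|_1,|\cdot|_2$ on $A$ are multiplicatively equivalent if for all $a,b,c\in A$: $|a|_1|c|_1\le|b|_1\iff|a|_2|c|_2\le|b|_2$. A place is a multiplicative equivalence class of generalized seminorms; $\mathrm{Speh}^m(A)$ is the set of places represented by tempered multiplicative seminorms. $\mathcal{M}(\mathbb{Z})$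 is the set of multiplicative seminorms $\mathbb{Z}\to\mathbb{R}_+$ (with usual order; $\mathbb{R}_+$ has tempered growth). Here $|n|_p=p^{-\mathrm{ord}_p(n)}$ ($|0|_p=0$); $|n|_{p,0}=0$ if $p\mid n$ and $1$ otherwise, valued in $\{0,1\}$ with $1+1=1$; $|n|_0=1$ for $n\neq0$, $|0|_0=0$; $|n|_\infty=\max(n,-n)$. *)

From mathcomp Require Import all_boot all_order all_algebra.
From mathcomp Require Import Rstruct.
From Stdlib Require Import Rdefinitions.
Import Order.TTheory GRing.Theory Num.Theory.
Notation RR := Rdefinitions.R.
Local Open Scope ring_scope.

Record TOAura : Type := {
  A_car :> Type;
  A_zero : A_car;
  A_one : A_car;
  A_add : A_car -> A_car -> A_car;
  A_mul : A_car -> A_car -> A_car;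
  A_le : A_car -> A_car -> Prop;
  A_addA : forall a b c, A_add a (A_add b c) = A_add (A_add a b) c;
  A_addC : forall a b, A_add a b = A_add b a;
  A_add0 : forall a, A_add A_zero a = a;
  A_mulA : forall a b c, A_mul a (A_mul b c) = A_mul (A_mul a b) c;
  A_mulC : forall a b, A_mul a b = A_mul b a;
  A_mul1 : forall a, A_mul A_one a = a;
  A_mulDl : forall a b c, A_mul (A_add a b) c = A_add (A_mul a c) (A_mul b c);
  A_mul0 : forall a, A_mul A_zero a = A_zero;
  A_one_neq0 : A_one <> A_zero;
  A_inv : forall a, a <> A_zero -> exists b, A_mul a b = A_one;
  A_le_refl : forall a, A_le a a;
  A_le_trans : forall a b c, A_le a b -> A_le b c -> A_le a c;
  A_le_anti : forall a b, A_le a b -> A_le b a -> a = b;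
  A_le_total : forall a b, A_le a b \/ A_le b a;
  A_le_add : forall a b c, A_le a b -> A_le (A_add a c) (A_add b c);
  A_le_mul : forall a b c, A_le a b -> A_le (A_mul a c) (A_mul b c);
  A_pos : A_le A_zero A_one
}.

Definition A_nat (R : TOAura) (n : nat) : R := iter n (A_add R (A_one R)) (A_zero R).
Definition A_pow (R : TOAura) (x : R) (n : nat) : R := iter n (A_mul R x) (A_one R).
(* evaluation in R at n of P = a_0 + a_1 X + ... in N[X], given by its coefficient list *)
Definition A_evalP (R : TOAura) (P : seq nat) (n : nat) : R :=
  foldr (fun a acc => A_add R (A_nat R a) (A_mul R (A_nat R n) acc)) (A_zero R) P.

Definition tempered (R : TOAura) : Prop :=
  forall (P : seq nat) (x : R), has (fun a => a != 0%N) P ->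
    (forall n : nat, A_le R (A_pow R x n) (A_evalP R P n)) -> A_le R x (A_one R).

(* generalized seminorm Z -> R: halo morphism (Z carries the trivial order, so
   monotonicity is vacuous) *)
Definition gen_seminorm (R : TOAura) (s : int -> R) : Prop :=
  s (0 : int) = A_zero R /\ s (1 : int) = A_one R /\
  (forall a b : int, A_le R (s (a + b)) (A_add R (s a) (s b))) /\
  (forall a b : int, A_le R (s (a * b)) (A_mul R (s a) (s b))).

Definition multiplicative (R : TOAura) (s : int -> R) : Prop :=
  forall a b : int, s (a * b) = A_mul R (s a) (s b).

Definition mequiv {T1 T2 : Type}
  (m1 : T1 -> T1 -> T1) (l1 : T1 -> T1 -> Prop) (f1 : int -> T1)
  (m2 : T2 -> T2 -> T2) (l2 : T2 -> T2 -> Prop) (f2 : int -> T2) : Prop :=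
  forall a b c : int, l1 (m1 (f1 a) (f1 c)) (f1 b) <-> l2 (m2 (f2 a) (f2 c)) (f2 b).

Definition Rmul : RR -> RR -> RR := fun x y => x * y.
Definition Rle_ : RR -> RR -> Prop := fun x y => x <= y.
(* {0,1} with 1 + 1 = 1 (booleans: false = 0, true = 1), 0 < 1 *)
Definition Bmul : bool -> bool -> bool := andb.
Definition Ble : bool -> bool -> Prop := fun x y => (x ==> y) = true.

Definition padic (p : nat) (n : int) : RR :=
  if n == 0 then 0 else ((p%:R : RR) ^- (logn p (absz n))).
Definition presidual (p : nat) (n : int) : bool := ~~ dvdn p (absz n).
Definition trivnorm (n : int) : RR := if n == 0 then 0 else 1.
Definition archnorm (n : int) : RR := Num.max (n%:~R : RR) (- n%:~R : RR).

Definition in_Speh_m {T : Type} (m : T -> T -> T) (l : T -> T -> Prop) (f : int -> T) : Prop :=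
  exists (R : TOAura) (s : int -> R),
    tempered R /\ gen_seminorm R s /\ multiplicative R s /\ mequiv (A_mul R) (A_le R) s m l f.

Definition in_MZ (f : int -> RR) : Prop :=
  (forall n, 0 <= f n) /\ f (0 : int) = 0 /\ f (1 : int) = 1 /\
  (forall a b, f (a + b) <= f a + f b) /\
  (forall a b, f (a * b) = f a * f b).

(* Ostrowski's argument, run in an arbitrary totally ordered aura.  Writing [n ^ (A k)] in
   base [m] bounds [s n ^ (A k)] by a linear function of [k] times [M ^ (B k)] whenever
   [n ^ A <= m ^ B] and [s m <= M] with [1 <= M]; temperedness removes the linear factor,
   so [s n ^ A <= M ^ B].  If some [s n > 1], this makes [s] strictly increasing on the
   naturals, hence equivalent to [|.|_oo].  Otherwise [s <= 1], and Bezout together with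
   temperedness forbids [s a < 1] and [s b < 1] for coprime [a], [b]; so [s] equals [1] off
   the multiples of a single prime [p] (or of none), and is determined by [s p], giving
   [|.|_{p,0}] when [s p = 0] and [|.|_p] when [0 < s p < 1].  Each listed seminorm is
   realised in [R_+] or in [{0,1}], both of tempered growth. *)
From Pilot Require Import Defs.
From mathcomp Require Import all_boot all_order all_algebra.
From mathcomp Require Import Rstruct zify lra.
From Stdlib Require Import Rdefinitions Classical.
Import Order.TTheory GRing.Theory Num.Theory.
(* [Rdefinitions] rebinds [_ ^ _] in [nat_scope]. *)
Import ssrnat.

Section AuraTheory.
Variable R : TOAura.
Declare Scope aura_scope.
Local Notation "0" := (A_zero R) : aura_scope.
Local Notation "1" := (A_one R) : aura_scope.
Local Notation "a + b" := (A_add R a b) : aura_scope.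
Local Notation "a * b" := (A_mul R a b) : aura_scope.
Local Notation "a <= b" := (A_le R a b) : aura_scope.
Local Notation "x ^ n" := (A_pow R x n) : aura_scope.
Local Notation "n %:A" := (A_nat R n) : aura_scope.
Local Open Scope aura_scope.

Lemma A_mulr1 x : x * 1 = x.
Proof. by rewrite A_mulC A_mul1. Qed.

Lemma A_mulr0 x : x * 0 = 0.
Proof. by rewrite A_mulC A_mul0. Qed.

Lemma A_addr0 x : x + 0 = x.
Proof. by rewrite A_addC A_add0. Qed.

Lemma A_ge0 x : 0 <= x.
Proof. by have := A_le_mul R _ _ x (A_pos R); rewrite A_mul0 A_mul1. Qed.

Lemma A_le_mull a b c : a <= b -> c * a <= c * b.
Proof. by rewrite !(A_mulC R c); apply: A_le_mul. Qed.

Lemma A_le_addl a b c : a <= b -> c + a <= c + b.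
Proof. by rewrite !(A_addC R c); apply: A_le_add. Qed.

Lemma A_le_mul2 a b c d : a <= b -> c <= d -> a * c <= b * d.
Proof. by move=> h1 h2; apply: A_le_trans (A_le_mul _ _ _ _ h1) (A_le_mull _ _ _ h2). Qed.

Lemma A_le_add2 a b c d : a <= b -> c <= d -> a + c <= b + d.
Proof. by move=> h1 h2; apply: A_le_trans (A_le_add _ _ _ _ h1) (A_le_addl _ _ _ h2). Qed.

Lemma A_le_addr a b : a <= a + b.
Proof. by have := A_le_addl _ _ a (A_ge0 b); rewrite A_addr0. Qed.

Lemma A_nle10 : ~ 1 <= 0.
Proof. by move=> h; apply: (A_one_neq0 R); apply: A_le_anti h (A_pos R). Qed.

Lemma A_nle_ge x y : ~ x <= y -> y <= x.
Proof. by case: (A_le_total R x y). Qed.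

Lemma A_mul_eq0 a b : a * b = 0 -> a = 0 \/ b = 0.
Proof.
move=> ab0; case: (classic (a = 0)) => [|a0]; first by left.
right; have [y ay] := A_inv R _ a0.
by rewrite -(A_mul1 R b) -ay (A_mulC R a) -A_mulA ab0 A_mulr0.
Qed.

Lemma A_le_mul2r a b c : c <> 0 -> a * c <= b * c -> a <= b.
Proof.
move=> c0 h; have [y cy] := A_inv R _ c0.
by have := A_le_mul _ _ _ y h; rewrite -!A_mulA cy !A_mulr1.
Qed.

Lemma A_powS x n : x ^ n.+1 = x * x ^ n.
Proof. by []. Qed.

Lemma A_powD x m n : x ^ (m + n) = x ^ m * x ^ n.
Proof. by elim: m => [|m IH]; rewrite ?A_mul1 // addSn !A_powS IH A_mulA. Qed.

Lemma A_powMn x y n : (x * y) ^ n = x ^ n * y ^ n.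
Proof.
elim: n => [|n IH]; first by rewrite A_mul1.
rewrite !A_powS IH -!A_mulA; congr (_ * _); rewrite !A_mulA; congr (_ * _).
exact: A_mulC.
Qed.

Lemma A_powM x m n : x ^ (m * n) = (x ^ m) ^ n.
Proof. by elim: n => [|n IH]; rewrite ?muln0 // mulnS A_powD IH. Qed.

Lemma A_pow1n n : 1 ^ n = 1.
Proof. by elim: n => // n IH; rewrite A_powS IH A_mul1. Qed.

Lemma A_le_pow x y n : x <= y -> x ^ n <= y ^ n.
Proof.
by move=> xy; elim: n => [|n IH]; [apply: A_le_refl | rewrite !A_powS; apply: A_le_mul2].
Qed.

Lemma A_pow_ge1 x n : 1 <= x -> 1 <= x ^ n.
Proof. by move=> x1; rewrite -(A_pow1n n); apply: A_le_pow. Qed.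

Lemma A_pow_le1 x n : x <= 1 -> x ^ n <= 1.
Proof. by move=> x1; rewrite -(A_pow1n n); apply: A_le_pow. Qed.

Lemma A_pow_neq0 x n : x <> 0 -> x ^ n <> 0.
Proof.
move=> x0; elim: n => [|n IH]; first exact: A_one_neq0.
by rewrite A_powS => /A_mul_eq0 [].
Qed.

Lemma A_ler_pow t i j : t <> 0 -> ~ 1 <= t -> (t ^ i <= t ^ j <-> (j <= i)%N).
Proof.
move=> t0 t_lt1; have t_le1 := A_nle_ge _ _ t_lt1.
split=> [|ji]; last first.
  by rewrite -(subnKC ji) A_powD -[X in _ <= X]A_mulr1; apply: A_le_mull; apply: A_pow_le1.
case: (leqP j i) => // ij.
rewrite -(subnKC (ltnW ij)) A_powD -{1}(A_mulr1 (t ^ i)) !(A_mulC R (t ^ i)).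
move/(A_le_mul2r _ _ _ (A_pow_neq0 _ i t0)); rewrite -(subnSK ij) A_powS => h.
exfalso; apply: t_lt1; apply: A_le_trans h _.
by rewrite -[X in _ <= X]A_mulr1; apply: A_le_mull; apply: A_pow_le1.
Qed.

Lemma A_natS n : n.+1%:A = 1 + n%:A.
Proof. by []. Qed.

Lemma A_natD m n : (m + n)%:A = m%:A + n%:A.
Proof. by elim: m => [|m IH]; rewrite ?A_add0 // addSn !A_natS IH A_addA. Qed.

Lemma A_natM m n : (m * n)%:A = m%:A * n%:A.
Proof. by elim: m => [|m IH]; rewrite ?A_mul0 // mulSn A_natD IH A_natS A_mulDl A_mul1. Qed.

Lemma A_nat1 : 1%:A = 1.
Proof. exact: A_addr0. Qed.

Lemma A_nat2 x : 2%:A * x = x + x.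
Proof. by rewrite A_natS A_nat1 A_mulDl A_mul1. Qed.

Lemma A_le_nat m n : (m <= n)%N -> m%:A <= n%:A.
Proof. by move=> mn; rewrite -(subnKC mn) A_natD; apply: A_le_addr. Qed.

Lemma A_evalP_linear a b n : A_evalP R [:: a; b] n = (a + b * n)%:A.
Proof. by rewrite /A_evalP /= A_mulr0 A_addr0 A_natD A_natM (A_mulC R n%:A). Qed.

Hypothesis temp : tempered R.

(* Dividing by [y ^ k] turns the hypothesis into [(x / y) ^ k <= a + b k]. *)
Lemma A_le_of_tempered (a b : nat) x y : (0 < a)%N -> y <> 0 ->
  (forall k, x ^ k <= (a + b * k)%:A * y ^ k) -> x <= y.
Proof.
move=> a0 y0 bound; have [z yz] := A_inv R _ y0.
suff xz1 : x * z <= 1.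
  by have := A_le_mul _ _ _ y xz1; rewrite A_mul1 -A_mulA (A_mulC R z) yz A_mulr1.
apply: (temp [:: a; b]); first by rewrite /= -lt0n a0.
move=> k; rewrite A_evalP_linear A_powMn.
apply: A_le_trans (A_le_mul _ _ _ _ (bound k)) _.
by rewrite -A_mulA -A_powMn yz A_pow1n A_mulr1; apply: A_le_refl.
Qed.

End AuraTheory.

Local Open Scope ring_scope.

Lemma leq_expn2r m n e : (m <= n)%N -> (m ^ e <= n ^ e)%N.
Proof. by move=> mn; elim: e => // e IH; rewrite !expnS leq_mul. Qed.

Lemma PoszX (m n : nat) : Posz (m ^ n)%N = Posz m ^+ n.
Proof. by rewrite -natz natrX natz. Qed.

Lemma bernoulli_nat x n : (x ^ n * (x + n) <= x * (x + 1) ^ n)%N.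
Proof.
elim: n => [|n IH]; first by rewrite expn0 mul1n addn0 muln1.
rewrite !expnS; set P := (x ^ n)%N in IH *; set Q := ((x + 1) ^ n)%N in IH *; nia.
Qed.

(* Take [A = x (x - 1)] in [bernoulli_nat]. *)
Lemma expn_gap x y : (0 < x)%N -> (x < y)%N -> exists A, (x ^ A.+1 <= y ^ A)%N.
Proof.
move=> x0 xy; exists (x * (x - 1))%N.
apply: (@leq_trans ((x + 1) ^ (x * (x - 1)))%N); last by apply: leq_expn2r; rewrite addn1.
have := bernoulli_nat x (x * (x - 1)).
have -> : (x + x * (x - 1) = x * x)%N by rewrite mulnBr muln1 subnKC // leq_pmulr.
by rewrite expnS; set P := (x ^ (x * (x - 1)))%N; nia.
Qed.

Lemma ex_minimal (P : nat -> Prop) n : P n -> exists m, P m /\ forall k, (k < m)%N -> ~ P k.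
Proof.
elim/ltn_ind: n => n IH Pn.
have [[k kn Pk] | no_smaller] := classic (exists2 k, (k < n)%N & P k); first exact: IH kn Pk.
by exists n; split=> // k kn Pk; apply: no_smaller; exists k.
Qed.

Section MultiplicativeEquivalence.
Context {T1 T2 T3 : Type} {m1 : T1 -> T1 -> T1} {l1 : T1 -> T1 -> Prop}.
Context {m2 : T2 -> T2 -> T2} {l2 : T2 -> T2 -> Prop}.
Context {m3 : T3 -> T3 -> T3} {l3 : T3 -> T3 -> Prop}.

Lemma mequiv_sym {f1 f2} : mequiv m1 l1 f1 m2 l2 f2 -> mequiv m2 l2 f2 m1 l1 f1.
Proof. by move=> eqv a b c; split=> /(eqv a b c). Qed.

Lemma mequiv_trans {f1 f2 f3} :
  mequiv m1 l1 f1 m2 l2 f2 -> mequiv m2 l2 f2 m3 l3 f3 -> mequiv m1 l1 f1 m3 l3 f3.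
Proof.
by move=> eqv12 eqv23 a b c; split=> [/(eqv12 a b c)/(eqv23 a b c)|/(eqv23 a b c)/(eqv12 a b c)].
Qed.

Lemma eq_mequiv {f1 f2 g1 g2} : mequiv m1 l1 f1 m2 l2 f2 ->
  f1 =1 g1 -> f2 =1 g2 -> mequiv m1 l1 g1 m2 l2 g2.
Proof. by move=> eqv e1 e2 a b c; rewrite -!e1 -!e2. Qed.

End MultiplicativeEquivalence.

Definition A_ind (R : TOAura) (P : pred int) (n : int) : R :=
  if P n then A_one R else A_zero R.

(* The shape of [|.|_p] with [t] in place of [1/p]; for [t = 0] this is [|.|_{p,0}]. *)
Definition A_padic {R : TOAura} (t : R) (p : nat) (n : int) : R :=
  if n == 0 then A_zero R else A_pow R t (logn p `|n|).

Lemma A_ind_le (R : TOAura) (P : pred int) a b c :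
  A_le R (A_mul R (A_ind R P a) (A_ind R P c)) (A_ind R P b) <-> (P a && P c ==> P b).
Proof.
rewrite /A_ind; case: (P a); case: (P b); case: (P c);
  rewrite ?A_mul1 ?A_mul0 ?A_mulr0 /=; split=> h //;
  by [apply: A_le_refl | apply: A_ge0 | case: (A_nle10 _ h)].
Qed.

Lemma A_padic_le (R : TOAura) (t : R) p a b c : t <> A_zero R -> ~ A_le R (A_one R) t ->
  A_le R (A_mul R (A_padic t p a) (A_padic t p c)) (A_padic t p b) <->
  [|| a == 0, c == 0 | (b != 0) && (logn p `|b| <= logn p `|a| + logn p `|c|)%N].
Proof.
move=> t0 t_lt1; rewrite /A_padic.
case: (a == 0); first by rewrite A_mul0; split=> // _; apply: A_ge0.
case: (c == 0); first by rewrite A_mulr0; split=> // _; apply: A_ge0.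
rewrite -A_powD; case: (b == 0) => /=; last exact: A_ler_pow.
split=> // tk0; exfalso; apply: (A_pow_neq0 _ _ _ t0).
exact: A_le_anti tk0 (A_ge0 _ _).
Qed.

Lemma mequiv_ind (R1 R2 : TOAura) (P : pred int) :
  mequiv (A_mul R1) (A_le R1) (A_ind R1 P) (A_mul R2) (A_le R2) (A_ind R2 P).
Proof. by move=> a b c; rewrite !A_ind_le. Qed.

Lemma mequiv_padic {R1 R2 : TOAura} {t1 : R1} {t2 : R2} {p} :
  t1 <> A_zero R1 -> ~ A_le R1 (A_one R1) t1 ->
  t2 <> A_zero R2 -> ~ A_le R2 (A_one R2) t2 ->
  mequiv (A_mul R1) (A_le R1) (A_padic t1 p) (A_mul R2) (A_le R2) (A_padic t2 p).
Proof. by move=> t10 t1_lt1 t20 t2_lt1 a b c; rewrite !A_padic_le. Qed.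

Lemma A_padic0 (R : TOAura) p : prime p -> A_padic (A_zero R) p =1 A_ind R (presidual p).
Proof.
move=> p_prime n; rewrite /A_padic /A_ind /presidual.
have [->|n0] := eqVneq n 0; first by rewrite dvdn0.
case: (logn p `|n|) (logn_gt0 p `|n|) => [|k];
  by rewrite mem_primes p_prime absz_gt0 n0 /= => <- //=; rewrite A_mul0.
Qed.

Definition nnreal := {x : RR | 0 <= x}.

Definition nn0 : nnreal := exist _ 0 (lexx 0).
Definition nn1 : nnreal := exist _ 1 ler01.
Definition nnadd (a b : nnreal) : nnreal :=
  exist _ (sval a + sval b) (addr_ge0 (svalP a) (svalP b)).
Definition nnmul (a b : nnreal) : nnreal :=
  exist _ (sval a * sval b) (mulr_ge0 (svalP a) (svalP b)).
Definition nnle (a b : nnreal) : Prop := sval a <= sval b.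

Lemma nnreal_inj (a b : nnreal) : sval a = sval b -> a = b.
Proof. by case: a b => [x x0] [y y0] /= xy; subst y; congr exist; apply: bool_irrelevance. Qed.

Lemma nnreal_inv (a : nnreal) : a <> nn0 -> exists b, nnmul a b = nn1.
Proof.
move=> a0; have a_neq0 : sval a != 0 by apply/eqP => e; apply: a0; apply: nnreal_inj.
exists (exist _ (sval a)^-1 (etrans (invr_ge0 _) (svalP a))).
by apply: nnreal_inj; rewrite /= mulfV.
Qed.

Definition nnreal_aura : TOAura.
refine (@Build_TOAura nnreal nn0 nn1 nnadd nnmul nnle
  _ _ _ _ _ _ _ _ _ nnreal_inv _ _ _ _ _ _ _); rewrite /nnle.
- by move=> a b c; apply: nnreal_inj; rewrite /= addrA.
- by move=> a b; apply: nnreal_inj; rewrite /= addrC.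
- by move=> a; apply: nnreal_inj; rewrite /= add0r.
- by move=> a b c; apply: nnreal_inj; rewrite /= mulrA.
- by move=> a b; apply: nnreal_inj; rewrite /= mulrC.
- by move=> a; apply: nnreal_inj; rewrite /= mul1r.
- by move=> a b c; apply: nnreal_inj; rewrite /= mulrDl.
- by move=> a; apply: nnreal_inj; rewrite /= mul0r.
- by move/(f_equal sval)/eqP; rewrite /= oner_eq0.
- by move=> a.
- by move=> a b c; apply: le_trans.
- by move=> a b ab ba; apply: nnreal_inj; apply: le_anti; rewrite ab ba.
- by move=> a b; case: (lerP (sval a) (sval b)) => [|/ltW]; [left | right].
- by move=> a b c; rewrite /= lerD2r.
- by move=> a b c ab; rewrite /=; apply: ler_wpM2r => //; apply: (svalP c).
- by rewrite /= ler01.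
Defined.

Definition bool_aura : TOAura.
refine (@Build_TOAura bool false true orb andb Ble _ _ _ _ _ _ _ _ _ _ _ _ _ _ _ _ _);
  rewrite /Ble.
- by case; case; case.
- by case; case.
- by [].
- by case; case; case.
- by case; case.
- by [].
- by case; case; case.
- by [].
- by [].
- by case => // _; exists true.
- by case.
- by case; case; case.
- by case; case.
- by case; case; [left|right|left|left].
- by case; case; case.
- by case; case; case.
- by [].
Defined.

Lemma nnreal_pow (x : nnreal_aura) n : sval (A_pow nnreal_aura x n) = sval x ^+ n.
Proof. by elim: n => //= n IH; rewrite exprS -IH. Qed.

Lemma mequiv_sval (f : int -> nnreal_aura) :
  mequiv (A_mul nnreal_aura) (A_le nnreal_aura) f Rmul Rle_ (fun n => sval (f n)).
Proof. by []. Qed.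

Definition nnreal_invn (p : nat) : nnreal_aura :=
  exist _ (p%:R^-1) (etrans (invr_ge0 _) (ler0n _ p)).

Lemma nnreal_invn_neq0 {p} : (0 < p)%N -> nnreal_invn p <> A_zero nnreal_aura.
Proof. by move=> p0 /(f_equal sval) /= /eqP; rewrite invr_eq0 pnatr_eq0 eqn0Ngt p0. Qed.

Lemma nnreal_invn_lt1 {p} : (1 < p)%N -> ~ A_le nnreal_aura (A_one nnreal_aura) (nnreal_invn p).
Proof.
move=> p1; rewrite /A_le /= /nnle /= invf_ge1 ?ltr0n ?(ltn_trans _ p1) //.
by rewrite lern1 leqNgt p1.
Qed.

Lemma padicE p : padic p =1 (fun n => sval (A_padic (nnreal_invn p) p n)).
Proof. by move=> n; rewrite /padic /A_padic; case: (n == 0); rewrite //= nnreal_pow exprVn. Qed.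

Lemma archnormE n : archnorm n = (`|n|%N%:R : RR).
Proof. by rewrite /archnorm maxrN -intr_norm -abszE. Qed.

Lemma trivnormE : trivnorm =1 (fun n => sval (A_ind nnreal_aura (fun n => n != 0) n)).
Proof. by move=> n; rewrite /trivnorm /A_ind; case: (n == 0). Qed.

Lemma presidualE p : presidual p =1 A_ind bool_aura (presidual p).
Proof. by move=> n; rewrite /A_ind; case: presidual. Qed.

Section Seminorm.
Context {R : TOAura} {s : int -> R}.
Hypotheses (s_seminorm : gen_seminorm R s) (sM : Defs.multiplicative R s).

Lemma sn0 : s 0 = A_zero R.
Proof. by case: s_seminorm. Qed.

Lemma sn1 : s 1 = A_one R.
Proof. by case: s_seminorm => _ []. Qed.

Lemma snD a b : A_le R (s (a + b)) (A_add R (s a) (s b)).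
Proof. by case: s_seminorm => _ [_ []]. Qed.

(* [s (-1)] is a square root of [1], and [x * x = 1] forces [x = 1] in a totally ordered aura. *)
Lemma snN1 : s (-1) = A_one R.
Proof.
have sq : A_mul R (s (-1)) (s (-1)) = A_one R by rewrite -sM mulrNN mulr1 sn1.
have [x_le1 | x_ge1] := A_le_total R (s (-1)) (A_one R).
  by apply: A_le_anti => //; rewrite -sq -{3}(A_mulr1 _ (s (-1))); apply: A_le_mull.
by apply: A_le_anti => //; rewrite -sq -{1}(A_mulr1 _ (s (-1))); apply: A_le_mull.
Qed.

Lemma snN n : s (- n) = s n.
Proof. by rewrite -mulN1r sM snN1 A_mul1. Qed.

Lemma sn_absz n : s n = s `|n|%N.
Proof. by case: n => // n; rewrite NegzE snN. Qed.

Lemma snX x k : s (x ^+ k) = A_pow R (s x) k.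
Proof. by elim: k => [|k IH]; rewrite ?sn1 // exprS sM IH. Qed.

Lemma sn_le_nat (n : nat) : A_le R (s n) (A_nat R n).
Proof.
elim: n => [|n IH]; first by rewrite sn0; apply: A_le_refl.
rewrite -addn1 PoszD A_natD A_nat1 -sn1.
by apply: A_le_trans (snD _ _) _; apply: A_le_add.
Qed.

(* Writing [N] in base [m] with [L.+1] digits and bounding each digit by [m]. *)
Lemma sn_le_digits {m : nat} {M : R} {L N : nat} :
  (0 < m)%N -> A_le R (A_one R) M -> A_le R (s m) M -> (N < m ^ L.+1)%N ->
  A_le R (s N) (A_mul R (A_nat R (L.+1 * m)) (A_pow R M L)).
Proof.
move=> m0 M_ge1 smM; elim: L N => [|L IH] N N_lt.
  rewrite A_mulr1 mul1n; apply: A_le_trans (sn_le_nat N) _.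
  by apply: A_le_nat; rewrite expn1 in N_lt; apply: ltnW.
rewrite (divn_eq N m) PoszD PoszM; apply: A_le_trans (snD _ _) _.
rewrite sM mulSn A_natD A_mulDl A_addC; apply: A_le_add2.
  apply: A_le_trans (sn_le_nat _) _; rewrite -[X in A_le _ X _]A_mulr1.
  by apply: A_le_mul2; [apply: A_le_nat; rewrite ltnW // ltn_mod | apply: A_pow_ge1].
rewrite A_powS (A_mulC R M) A_mulA; apply: A_le_mul2 => //.
by apply: IH; rewrite ltn_divLR // -expnSr.
Qed.

Hypothesis temp : tempered R.

(* Ostrowski's comparison: expand [n ^ (A k)] in base [m] and let [k] grow. *)
Lemma sn_le_pow (m n A B : nat) (M : R) : (1 < m)%N ->
  A_le R (A_one R) M -> A_le R (s m) M -> (n ^ A <= m ^ B)%N ->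
  A_le R (A_pow R (s n) A) (A_pow R M B).
Proof.
move=> m1 M_ge1 smM nm; have m0 := ltnW m1.
have MB0 : A_pow R M B <> A_zero R.
  by move=> MB0; apply: (A_nle10 R); rewrite -MB0; apply: A_pow_ge1.
apply: (A_le_of_tempered _ temp m (m * B)) => // k.
have digits : (n ^ (A * k) < m ^ (B * k).+1)%N.
  rewrite expnS !expnM; apply: leq_ltn_trans (leq_expn2r _ _ k nm) _.
  by rewrite -[X in (X < _)%N]mul1n ltn_mul2r expn_gt0 expn_gt0 m0.
have := sn_le_digits m0 M_ge1 smM digits.
by rewrite PoszX snX -!A_powM mulSn (mulnC (B * k)) mulnA.
Qed.

Lemma sn_coprime_ge1 (a b : int) : coprimez a b ->
  (forall n, A_le R (s n) (A_one R)) ->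
  A_le R (A_one R) (s a) \/ A_le R (A_one R) (s b).
Proof.
move=> ab_coprime s_le1.
have [t [sat sbt t_eq]] : exists t,
    [/\ A_le R (s a) t, A_le R (s b) t & t = s a \/ t = s b].
  have [sab | sba] := A_le_total R (s a) (s b).
    by exists (s b); split; [|apply: A_le_refl|right].
  by exists (s a); split; [apply: A_le_refl| |left].
suff t_ge1 : A_le R (A_one R) t by case: t_eq => <-; [left | right].
have bezout k : A_le R (A_one R) (A_mul R (A_nat R 2) (A_pow R t k)).
  have [u [v uv]] := Bezoutz (a ^+ k) (b ^+ k).
  have /eqP abk1 : coprimez (a ^+ k) (b ^+ k) by rewrite coprimezXl ?coprimezXr.
  rewrite -sn1 -abk1 -uv A_nat2; apply: A_le_trans (snD _ _) _.
  by rewrite !sM !snX; apply: A_le_add2; rewrite -[X in A_le _ _ X]A_mul1;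
    apply: A_le_mul2 => //; apply: A_le_pow.
have [t0 | t_neq0] := classic (t = A_zero R).
  by have := bezout 1%N; rewrite t0 /= A_mul0 A_mulr0 => /A_nle10.
apply: (A_le_of_tempered _ temp 2 0) => // k.
by rewrite A_pow1n; apply: bezout.
Qed.

Lemma sn_gt1_spread (n0 : nat) : (1 < n0)%N -> ~ A_le R (s n0) (A_one R) ->
  forall m, (1 < m)%N -> ~ A_le R (s m) (A_one R).
Proof.
move=> n0_gt1 sn0_gt1 m m_gt1 sm_le1; apply: sn0_gt1.
have := @sn_le_pow m n0 1 n0 (A_one R) m_gt1 (A_le_refl _ _) sm_le1.
by rewrite expn1 A_pow1n /= A_mulr1; apply; rewrite ltnW // ltn_expl.
Qed.

Section Archimedean.
Hypothesis sn_gt1 : forall m, (1 < m)%N -> ~ A_le R (s m) (A_one R).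

Lemma sn_ge1 {m : nat} : (0 < m)%N -> A_le R (A_one R) (s m).
Proof.
case: m => [//|[|m] _]; first by rewrite sn1; apply: A_le_refl.
by apply: A_nle_ge; apply: sn_gt1.
Qed.

Lemma sn_le_mono (x y : nat) : (x <= y)%N -> A_le R (s x) (s y).
Proof.
case: x => [|x] xy; first by rewrite sn0; apply: A_ge0.
have [y_gt1 | y_le1] := ltnP 1 y; last first.
  have -> : y = x.+1 by lia.
  exact: A_le_refl.
have := @sn_le_pow y x.+1 1 1 (s y) y_gt1 (sn_ge1 (ltnW y_gt1)) (A_le_refl _ _).
by rewrite !expn1 /= !A_mulr1; apply.
Qed.

(* If [s y <= s x] with [x < y], then comparing [x ^ A.+1 <= y ^ A] gives [s x <= 1]. *)
Lemma sn_lt_mono (x y : nat) : (x < y)%N -> ~ A_le R (s y) (s x).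
Proof.
case: x => [|[|x]] xy syx.
- by apply: (A_nle10 R); rewrite -sn0; apply: A_le_trans (sn_ge1 xy) syx.
- by apply: (sn_gt1 _ xy); rewrite -sn1.
have [A gap] := @expn_gap x.+2 y isT xy.
have y_gt1 : (1 < y)%N by apply: leq_ltn_trans xy.
have := @sn_le_pow y x.+2 A.+1 A (s y) y_gt1 (sn_ge1 (ltnW y_gt1)) (A_le_refl _ _) gap.
move=> /A_le_trans /(_ (A_le_pow _ _ _ A syx)).
rewrite A_powS -{2}(A_mul1 _ (A_pow _ _ A)).
have sx_neq0 : A_pow R (s x.+2) A <> A_zero R.
  by apply: A_pow_neq0 => sx0; apply: (A_nle10 R); rewrite -sx0; apply: sn_ge1.
by move/(A_le_mul2r _ _ _ _ sx_neq0); apply: sn_gt1.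
Qed.

Lemma mequiv_archnorm : mequiv (A_mul R) (A_le R) s Rmul Rle_ archnorm.
Proof.
move=> a b c; rewrite -sM (sn_absz (a * c)) (sn_absz b) abszM /Rle_ /Rmul.
rewrite !archnormE -natrM ler_nat; split=> [|]; last exact: sn_le_mono.
by case: leqP => // ba /(sn_lt_mono _ _ ba).
Qed.

End Archimedean.

Section NonArchimedean.
Hypothesis sn_le1 : forall n, A_le R (s n) (A_one R).

Lemma sn_eq1 n : A_le R (A_one R) (s n) -> s n = A_one R.
Proof. exact: A_le_anti. Qed.

Lemma sn_trivial : (forall n : nat, (0 < n)%N -> A_le R (A_one R) (s n)) ->
  s =1 A_ind R (fun n => n != 0).
Proof.
move=> s_ge1 n; rewrite /A_ind; have [->|n0] := eqVneq n 0; first exact: sn0.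
by rewrite sn_absz; apply/sn_eq1/s_ge1; rewrite absz_gt0.
Qed.

(* The least [n > 0] with [s n < 1] is prime since [s] is multiplicative. *)
Lemma sn_prime_lt1 (n : nat) : (0 < n)%N -> ~ A_le R (A_one R) (s n) ->
  exists2 p, prime p & ~ A_le R (A_one R) (s p).
Proof.
move=> n0 sn_lt1.
have [p [[p0 sp_lt1] p_min]] :=
  @ex_minimal (fun n => 0 < n /\ ~ A_le R (A_one R) (s n))%N n (conj n0 sn_lt1).
exists p => //; case/boolP: (prime p) => // /primePn [p_le1 | [d /andP [d1 dp] d_dvd]];
  exfalso; apply: sp_lt1.
  have -> : p = 1%N by lia.
  by rewrite sn1; apply: A_le_refl.
have below_p m : (0 < m)%N -> (m < p)%N -> s m = A_one R.
  by move=> m0 mp; apply: sn_eq1; apply: NNPP => sm_lt1; apply: (p_min m mp).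
rewrite -(divnK d_dvd) PoszM sM below_p ?(below_p d) ?A_mul1 //; first exact: A_le_refl.
- by apply: ltn_trans d1.
- by rewrite divn_gt0 ?(dvdn_leq p0) // (ltn_trans _ d1).
- by rewrite ltn_Pdiv.
Qed.

Lemma sn_ndvd_eq1 (p m : nat) : prime p -> ~ A_le R (A_one R) (s p) -> ~~ (p %| m)%N ->
  s m = A_one R.
Proof.
move=> p_prime sp_lt1 p_ndvd; apply: sn_eq1.
have pm_coprime : coprimez p m by rewrite coprimezE /= prime_coprime.
by have [/sp_lt1|] := sn_coprime_ge1 _ _ pm_coprime sn_le1.
Qed.

Lemma sn_padicE p : prime p -> ~ A_le R (A_one R) (s p) -> s =1 A_padic (s p) p.
Proof.
move=> p_prime sp_lt1 n; rewrite /A_padic; have [->|n0] := eqVneq n 0; first exact: sn0.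
have [m p_coprime n_eq] := pfactor_coprime p_prime (etrans (absz_gt0 n) n0).
rewrite sn_absz {1}n_eq PoszM sM PoszX snX (@sn_ndvd_eq1 p m) ?A_mul1 //.
by rewrite -prime_coprime.
Qed.

End NonArchimedean.
End Seminorm.

Lemma classify_seminorm (R : TOAura) (s : int -> R) :
  tempered R -> gen_seminorm R s -> Defs.multiplicative R s ->
  (exists p : nat, prime p /\ mequiv (A_mul R) (A_le R) s Rmul Rle_ (padic p)) \/
  (exists p : nat, prime p /\ mequiv (A_mul R) (A_le R) s Bmul Ble (presidual p)) \/
  mequiv (A_mul R) (A_le R) s Rmul Rle_ trivnorm \/
  mequiv (A_mul R) (A_le R) s Rmul Rle_ archnorm.
Proof.
move=> temp s_sn sM.
have [[n [n_gt1 sn_gt1]] | no_gt1] :=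
  classic (exists n : nat, (1 < n)%N /\ ~ A_le R (s n) (A_one R)).
  by right; right; right; apply: mequiv_archnorm => //; apply: sn_gt1_spread n_gt1 sn_gt1.
have s_le1 n : A_le R (s n) (A_one R).
  rewrite (sn_absz s_sn sM); case: `|n|%N => [|[|m]].
  - by rewrite (sn0 s_sn); apply: A_ge0.
  - by rewrite (sn1 s_sn); apply: A_le_refl.
  - by apply: NNPP => sm_gt1; apply: no_gt1; exists m.+2.
have [[n [n_gt0 sn_lt1]] | no_lt1] :=
  classic (exists n : nat, (0 < n)%N /\ ~ A_le R (A_one R) (s n)).
  have [p p_prime sp_lt1] := sn_prime_lt1 s_sn sM s_le1 _ n_gt0 sn_lt1.
  have s_padic := sn_padicE s_sn sM temp s_le1 _ p_prime sp_lt1.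
  have [sp0 | sp_neq0] := classic (s p = A_zero R).
    right; left; exists p; split=> //.
    refine (eq_mequiv (mequiv_ind R bool_aura (presidual p)) _ _) => k.
      by rewrite s_padic sp0 A_padic0.
    by rewrite presidualE.
  left; exists p; split=> //.
  have padic_p_lt1 := nnreal_invn_lt1 (prime_gt1 p_prime).
  have padic_p0 := nnreal_invn_neq0 (prime_gt0 p_prime).
  refine (eq_mequiv (mequiv_trans (mequiv_padic sp_neq0 sp_lt1 padic_p0 padic_p_lt1)
    (mequiv_sval _)) _ _) => k //; by rewrite padicE.
right; right; left.
have s_ge1 m : (0 < m)%N -> A_le R (A_one R) (s m).
  by move=> m_gt0; apply: NNPP => sm_lt1; apply: no_lt1; exists m.
refine (eq_mequiv (mequiv_trans (mequiv_ind R nnreal_aura _) (mequiv_sval _)) _ _) => k.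
  by rewrite (sn_trivial s_sn sM s_le1 s_ge1).
by rewrite trivnormE.
Qed.

Lemma nnreal_nat n : sval (A_nat nnreal_aura n) = n%:R.
Proof. by elim: n => //= n ->; rewrite nat1r. Qed.

Lemma nnreal_evalP_le (P : seq nat) n :
  sval (A_evalP nnreal_aura P n) <= (sumn P)%:R * n.+1%:R ^+ size P.
Proof.
elim: P => [|a P IH] /=; first by rewrite mul0r.
rewrite /= !nnreal_nat natrD mulrDl; apply: lerD.
  by rewrite ler_peMr ?ler0n // exprn_ege1 ?ler1n.
rewrite exprSr mulrA mulrC; apply: ler_pM => //.
  exact: (svalP (A_evalP nnreal_aura P n)).
by rewrite ler_nat.
Qed.

Lemma bernoulli_real (x : RR) j : 1 <= x -> 1 + j%:R * (x - 1) <= x ^+ j.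
Proof.
move=> x1; elim: j => [|j IH]; first by rewrite mul0r addr0 expr0.
have := ler_wpM2l (le_trans ler01 x1) IH; rewrite exprS -natr1.
have : 0 <= (j%:R : RR) * ((x - 1) * (x - 1)) by apply: mulr_ge0; rewrite ?ler0n //; nra.
by nra.
Qed.

(* With [h = x - 1] and [e = d.+1]: [x ^ (j e) >= (j h) ^ e] by Bernoulli, which beats
   [K ((j e).+1) ^ d <= K (2 e) ^ d j ^ d] once [j > K (2 e) ^ d / h ^ e]. *)
Lemma poly_lt_expr {x K : RR} (d : nat) : 1 < x -> 0 <= K ->
  exists n, K * n.+1%:R ^+ d < x ^+ n.
Proof.
move=> x1 K0; set h := x - 1; have h0 : 0 < h by rewrite subr_gt0.
set e := d.+1.
have [C [C0 Ch]] : exists C, 0 <= C /\ C * h ^+ e = K * (2 * e)%N%:R ^+ d.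
  exists (K * (2 * e)%N%:R ^+ d / h ^+ e); split.
    by rewrite divr_ge0 ?mulr_ge0 ?exprn_ge0 ?ler0n // ltW.
  by rewrite divfK // expf_neq0 // lt0r_neq0.
set j := (Num.Def.archi_bound C).+1.
have Cj : C < j%:R by apply: lt_le_trans (archi_boundP C0) _; rewrite ler_nat.
exists (j * e)%N.
have low : (j%:R * h) ^+ e <= x ^+ (j * e).
  rewrite exprM; apply: lerXn2r; rewrite ?nnegrE ?exprn_ge0 ?mulr_ge0 ?ler0n //.
  - exact: ltW.
  - by apply: le_trans (ltW x1).
  - by apply: le_trans _ (bernoulli_real _ j (ltW x1)); rewrite lerDr.
have up : K * (j * e).+1%:R ^+ d <= C * h ^+ e * j%:R ^+ d.
  rewrite Ch -mulrA -exprMn -natrM; apply: ler_wpM2l => //; apply: lerXn2r;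
    rewrite ?nnegrE ?ler0n // ler_nat; nia.
have mid : C * h ^+ e * j%:R ^+ d < (j%:R * h) ^+ e.
  rewrite exprMn [j%:R ^+ e]exprS -!mulrA [j%:R ^+ d * _]mulrC ltr_pM2r //.
  by rewrite mulr_gt0 ?exprn_gt0 ?ltr0n.
exact: le_lt_trans up (lt_le_trans mid low).
Qed.

Lemma nnreal_tempered : tempered nnreal_aura.
Proof.
move=> P x _ bound; rewrite /A_le /= /nnle /=; case: lerP => // x_gt1.
have [n] := poly_lt_expr (size P) x_gt1 (ler0n _ (sumn P)).
by rewrite -nnreal_pow ltNge (le_trans (bound n) (nnreal_evalP_le P n)).
Qed.

Lemma bool_tempered : tempered bool_aura.
Proof. by move=> P []. Qed.

Lemma in_MZ_Speh (f : int -> RR) : in_MZ f -> in_Speh_m Rmul Rle_ f.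
Proof.
case=> f_ge0 [f0 [f1 [fD fM]]].
exists nnreal_aura, (fun n => exist _ (f n) (f_ge0 n) : nnreal); split.
  exact: nnreal_tempered.
split; last by split=> [a b|]; [apply: nnreal_inj; rewrite /= fM | apply: mequiv_sval].
by do ![split]; move=> *; rewrite ?/A_le /= /nnle /= ?fM //; apply: nnreal_inj.
Qed.

Lemma presidual0 p : presidual p 0 = false.
Proof. by rewrite /presidual dvdn0. Qed.

Lemma presidual1 p : prime p -> presidual p 1.
Proof. by move=> p_prime; rewrite /presidual /= dvdn1; case: eqP p_prime => // ->. Qed.

Lemma presidualM p a b : prime p -> presidual p (a * b) = presidual p a && presidual p b.
Proof. by move=> p_prime; rewrite /presidual abszM Euclid_dvdM // negb_or. Qed.

Lemma presidualD p a b : presidual p (a + b) -> presidual p a || presidual p b.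
Proof.
rewrite /presidual -negb_and; apply: contra => /andP [pa pb].
have pa' : a \in dvdz p by rewrite dvdzE.
have pb' : b \in dvdz p by rewrite dvdzE.
by have := rpredD pa' pb'; rewrite dvdzE.
Qed.

Lemma in_MZ_indicator (P : pred int) (f : int -> RR) :
  f =1 (fun n => if P n then 1 else 0) -> ~~ P 0 -> P 1 ->
  (forall a b, P (a * b) = P a && P b) -> (forall a b, P (a + b) -> P a || P b) ->
  in_MZ f.
Proof.
move=> fE P0 P1 PM PD; split=> [n|]; first by rewrite fE; case: (P n).
rewrite !fE (negbTE P0) P1; do 3!split=> //; move=> a b; rewrite !fE ?PM.
  case Pab: (P (a + b)); last by apply: addr_ge0; case: ifP.
  by move: (PD a b Pab); case: (P a); case: (P b); rewrite ?addr0 ?add0r // lerDl.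
by case: (P a); case: (P b); rewrite ?mulr1 ?mulr0.
Qed.

Definition presidualR (p : nat) (n : int) : RR := if presidual p n then 1 else 0.

Lemma in_MZ_presidualR p : prime p -> in_MZ (presidualR p).
Proof.
move=> p_prime; apply: (@in_MZ_indicator (presidual p)) => //.
- by rewrite presidual0.
- exact: presidual1.
- by move=> a b; apply: presidualM.
- exact: presidualD.
Qed.

Lemma mequiv_presidualR p : mequiv Rmul Rle_ (presidualR p) Bmul Ble (presidual p).
Proof.
refine (eq_mequiv (mequiv_trans (mequiv_sym (mequiv_sval _))
  (mequiv_ind nnreal_aura bool_aura (presidual p))) _ _) => n.
  by rewrite /presidualR /A_ind; case: presidual.
by rewrite presidualE.
Qed.

Lemma in_MZ_trivnorm : in_MZ trivnorm.
Proof.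
apply: (@in_MZ_indicator (fun n => n != 0)) => //.
- by move=> n; rewrite /trivnorm; case: (n == 0).
- by move=> a b; rewrite mulf_eq0 negb_or.
- by move=> a b; apply: contraTT; rewrite negb_or !negbK => /andP [/eqP -> /eqP ->].
Qed.

Lemma in_MZ_archnorm : in_MZ archnorm.
Proof.
split=> [n|]; first by rewrite archnormE.
rewrite !archnormE; do 2!split=> //; split=> a b; rewrite !archnormE.
  by rewrite -natrD ler_nat -lez_nat PoszD !abszE ler_normD.
by rewrite abszM natrM.
Qed.

Lemma padic0 p : padic p 0 = 0.
Proof. by rewrite /padic eqxx. Qed.

Lemma padic_nz p n : n != 0 -> padic p n = p%:R^-1 ^+ logn p `|n|.
Proof. by move=> n0; rewrite /padic (negbTE n0) exprVn. Qed.

Lemma padic_ge0 p n : 0 <= padic p n.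
Proof. by rewrite /padic; case: (n == 0); rewrite // invr_ge0 exprn_ge0. Qed.

Lemma padic1 p : padic p 1 = 1.
Proof. by rewrite padic_nz // logn1. Qed.

Lemma padicM p a b : prime p -> padic p (a * b) = padic p a * padic p b.
Proof.
move=> p_prime; have [->|a0] := eqVneq a 0; first by rewrite mul0r padic0 mul0r.
have [->|b0] := eqVneq b 0; first by rewrite mulr0 padic0 mulr0.
by rewrite !padic_nz ?mulf_neq0 // abszM lognM ?absz_gt0 // exprD.
Qed.

Lemma logn_addz p (a b : int) : prime p -> a + b != 0 ->
  leq (minn (logn p `|a|) (logn p `|b|)) (logn p `|a + b|).
Proof.
move=> p_prime ab0; set v := minn _ _.
have dvd_v (c : int) : (v <= logn p `|c|)%N -> c \in dvdz (p ^ v)%N.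
  by move=> vc; rewrite dvdzE /= (dvdn_trans (dvdn_exp2l p vc)) ?pfactor_dvdnn.
have := rpredD (dvd_v a (geq_minl _ _)) (dvd_v b (geq_minr _ _)).
by rewrite dvdzE /= pfactor_dvdn // absz_gt0.
Qed.

Lemma padicD p a b : prime p -> padic p (a + b) <= padic p a + padic p b.
Proof.
move=> p_prime; have [->|ab0] := eqVneq (a + b) 0.
  by rewrite padic0 addr_ge0 ?padic_ge0.
have [a0|a0] := eqVneq a 0; first by rewrite a0 add0r padic0 add0r.
have [b0|b0] := eqVneq b 0; first by rewrite b0 addr0 padic0 addr0.
rewrite !padic_nz //; set u : RR := p%:R^-1.
have u0 : 0 <= u by rewrite invr_ge0 ler0n.
have u1 : u <= 1 by rewrite invf_le1 ?ler1n ?ltr0n ?prime_gt0 ?prime_gt1.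
apply: le_trans (ler_wiXn2l u0 u1 (logn_addz _ _ _ p_prime ab0)) _.
have u_ge0 k : 0 <= u ^+ k by apply: exprn_ge0.
by rewrite /minn; case: ltnP => _; [rewrite lerDl | rewrite lerDr].
Qed.

Lemma in_MZ_padic p : prime p -> in_MZ (padic p).
Proof.
move=> p_prime; split; first exact: padic_ge0.
split; first exact: padic0.
split; first exact: padic1.
by split=> a b; [apply: padicD | apply: padicM].
Qed.

Lemma MZ_representative (R : TOAura) (s : int -> R) :
  tempered R -> gen_seminorm R s -> Defs.multiplicative R s ->
  exists f : int -> RR, in_MZ f /\ mequiv Rmul Rle_ f (A_mul R) (A_le R) s.
Proof.
move=> temp s_sn sM.
case: (classify_seminorm _ _ temp s_sn sM) => [[p [p_prime eqv]]|[[p [p_prime eqv]]|[eqv|eqv]]].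
- by exists (padic p); split; [apply: in_MZ_padic | apply: mequiv_sym].
- exists (presidualR p); split; first exact: in_MZ_presidualR.
  exact: mequiv_trans (mequiv_presidualR p) (mequiv_sym eqv).
- by exists trivnorm; split; [apply: in_MZ_trivnorm | apply: mequiv_sym].
- by exists archnorm; split; [apply: in_MZ_archnorm | apply: mequiv_sym].
Qed.

Lemma presidual_Speh p : prime p -> in_Speh_m Bmul Ble (presidual p).
Proof.
move=> p_prime; exists bool_aura, (presidual p); split; first exact: bool_tempered.
split; last by split=> [a b|a b c //]; apply: presidualM.
rewrite /gen_seminorm presidual0 presidual1 //; do 2!split=> //.
split=> a b; rewrite /A_le /= /Ble; first exact/implyP/presidualD.
by rewrite presidualM //; apply/implyP.
Qed.

(* Mathcomp's deprecated [multiplicative] would otherwise shadow [Defs.multiplicative]. *)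
Import Pilot.Defs.

Theorem proposition3p10 :
  (* every tempered multiplicative generalized seminorm on Z is equivalent to one in the list *)
  (forall (R : TOAura) (s : int -> R),
     tempered R -> gen_seminorm R s -> multiplicative R s ->
     (exists p : nat, prime p /\ mequiv (A_mul R) (A_le R) s Rmul Rle_ (padic p)) \/
     (exists p : nat, prime p /\ mequiv (A_mul R) (A_le R) s Bmul Ble (presidual p)) \/
     mequiv (A_mul R) (A_le R) s Rmul Rle_ trivnorm \/
     mequiv (A_mul R) (A_le R) s Rmul Rle_ archnorm) /\
  (* each listed place belongs to Speh^m(Z) *)
  (forall p : nat, prime p -> in_Speh_m Rmul Rle_ (padic p)) /\
  (forall p : nat, prime p -> in_Speh_m Bmul Ble (presidual p)) /\
  in_Speh_m Rmul Rle_ trivnorm /\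
  in_Speh_m Rmul Rle_ archnorm /\
  (* M(Z) -> Speh^m(Z) is surjective *)
  (forall (R : TOAura) (s : int -> R),
     tempered R -> gen_seminorm R s -> multiplicative R s ->
     exists f : int -> RR, in_MZ f /\ mequiv Rmul Rle_ f (A_mul R) (A_le R) s).
Proof.
split; first exact: classify_seminorm.
split; first by move=> p p_prime; apply/in_MZ_Speh/in_MZ_padic.
split; first exact: presidual_Speh.
split; first exact/in_MZ_Speh/in_MZ_trivnorm.
split; first exact/in_MZ_Speh/in_MZ_archnorm.
exact: MZ_representative.
Qed.
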